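(* Let $L$ be a varietal family of logics. A finitary $\mathbb{M}$-algebra $\mathfrak{A}$ is $L$-definable if, and only if, every language recognised by $\mathfrak{A}$ is $L$-definable.
   Context: Fix a set $\Xi$ of sorts; $\mathsf{Pos}^\Xi$: $\Xi$-sorted families of partial orders with sort-wise monotone maps. $\mathbb{M}$ is a monad on $\mathsf{Pos}^\Xi$ ($\mathrm{flat},\mathrm{sing}$) preserving injective, surjective, bijective functions and preimages and using the standard ordering. $\mathbb{M}$-algebras $\langle A,\pi\rangle$: $\pi\circ\mathbb{M}\pi=\pi\circ\mathrm{flat}$, $\pi\circ\mathrm{sing}=\mathrm{id}$; morphisms commute with products. Finitary: sort-wise finite and finitely generated. An alphabet is a finite unordered set $\Sigma$; a language is $K\subseteq\mathbb{M}_\xi\Sigma$; $\mathfrak{A}$ recognises $K$ if $K=\varphi^{-1}[P]$ for a morphism $\varphi:\mathbb{M}\Sigma\to\mathfrak{A}$ and upwards closed $P\subseteq A_\xi$. Contexts with hole of sort $\zeta$: $p\in\mathbb{M}(\Sigma+\{\Box\})$; $p[s]$ is the image under the algebra morphism extending $\Box\mapsto s$, $c\mapsto\mathrm{sing}(c)$; derivative $p^{-1}[K]=\{s:p[s]\in K\}$. A variety of languages: a family assigning to each alphabet a class of languages over it, closed under finite unions and intersections, inverse morphisms ($\psi^{-1}[K]$ for algebra morphisms $\psi:\mathbb{M}\Sigma\to\mathbb{M}\Gamma$), and derivatives. A logic is $\langle L,\mathcal{M},\models\rangle$ with a $\Xi$-sorted set of formulae, a $\Xi$-sorted class of models, and satisfaction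 between models and formulae of the same sort; $\mathrm{Mod}(\varphi)=\{M:M\models\varphi\}$. A family of logics $L$ assigns to each alphabet $\Sigma$ a logic $L[\Sigma]$ whose models of sort $\xi$ are the elements of $\mathbb{M}_\xi\Sigma$, and to each function $f:\Sigma\to\Gamma$ a sort-preserving map $\lambda_f:L[\Gamma]\to L[\Sigma]$ with $s\models\lambda_f(\varphi)\iff\mathbb{M}f(s)\models\varphi$ (functorially). $K\subseteq\mathbb{M}_\xi\Sigma$ is $L$-definable if $K=\mathrm{Mod}(\varphi)$ for some $\varphi\in L_\xi[\Sigma]$; for a finite ordered set $C$, $K\subseteq\mathbb{M}C$ is $L$-definable if $(\mathbb{M}\iota)^{-1}[K]$ is, where $\iota:\mathbb{V}C\to C$ is the identity from $C$ with trivial order. $L$ is varietal if the $L$-definable languages form a variety of languages. A finite subset $C\subseteq A$ of an algebra is $L$-definably embedded if for every $a\in A$ the set $\pi^{-1}(\uparrow a)\cap\mathbb{M}C$ is $L$-definable ($\uparrow a=\{b:b\geq a\}$, $C$ with the order inherited from $A$). $\mathfrak{A}$ is $L$-definable if it is finitary and every finite subset of $A$ is $L$-definably embedded. *)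

From Stdlib Require Import List ProofIrrelevance.

Record SPos (Xi : Type) := mkSPos {
  car : Xi -> Type;
  le : forall x, car x -> car x -> Prop;
  le_refl : forall x (a : car x), le x a a;
  le_trans : forall x (a b c : car x), le x a b -> le x b c -> le x a c;
  le_antisym : forall x (a b : car x), le x a b -> le x b a -> a = b }.
Arguments car {Xi} _ _.
Arguments le {Xi} _ {x} _ _.

Record SMor (Xi : Type) (A B : SPos Xi) := mkSMor {
  smap : forall x, car A x -> car B x;
  smap_mono : forall x (a b : car A x), le A a b -> le B (smap x a) (smap x b) }.
Arguments SMor {Xi} _ _.
Arguments smap {Xi A B} _ _ _.
Arguments smap_mono {Xi A B} _ {x a b} _.
Arguments le_antisym {Xi} _ {x a b} _ _.
Arguments le_refl {Xi} _ {x} a.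
Arguments le_trans {Xi} _ {x a b c} _ _.

Definition idm (Xi : Type) (A : SPos Xi) : SMor A A :=
  @mkSMor Xi A A (fun x a => a) (fun x a b h => h).

Arguments idm {Xi} A.
Definition scomp (Xi : Type) (A B C : SPos Xi) (g : SMor B C) (f : SMor A B) : SMor A C :=
  @mkSMor Xi A C (fun x a => smap g x (smap f x a))
    (fun x a b h => smap_mono g (smap_mono f h)).

Arguments scomp {Xi A B C} g f.
Definition meq (Xi : Type) (A B : SPos Xi) (f g : SMor A B) : Prop :=
  forall x a, smap f x a = smap g x a.

Arguments meq {Xi A B} f g.
Definition injS (Xi : Type) (A B : SPos Xi) (f : SMor A B) : Prop :=
  forall x (a b : car A x), smap f x a = smap f x b -> a = b.
Arguments injS {Xi A B} f.
Definition surjS (Xi : Type) (A B : SPos Xi) (f : SMor A B) : Prop :=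
  forall x (b : car B x), exists a, smap f x a = b.
Arguments surjS {Xi A B} f.
Definition bijS (Xi : Type) (A B : SPos Xi) (f : SMor A B) : Prop :=
  injS f /\ surjS f.

Arguments bijS {Xi A B} f.
Definition sub (Xi : Type) (A : SPos Xi) (P : forall x, car A x -> Prop) : SPos Xi.
Proof.
  refine (@mkSPos Xi (fun x => {a : car A x | P x a})
            (fun x a b => le A (proj1_sig a) (proj1_sig b)) _ _ _).
  - intros x a; apply (le_refl _).
  - intros x a b c; apply le_trans.
  - intros x [a pa] [b pb] h1 h2; simpl in *.
    pose proof (le_antisym _ h1 h2) as e; subst b.
    f_equal; apply proof_irrelevance.
Defined.

Arguments sub {Xi} A P.
Definition incl (Xi : Type) (A : SPos Xi) (P : forall x, car A x -> Prop)
  : SMor (sub A P) A :=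
  @mkSMor Xi (sub A P) A (fun x a => proj1_sig a) (fun x a b h => h).

(* the order relation <= of A as a poset (componentwise order), with projections *)
Arguments incl {Xi A} P.
Definition relP (Xi : Type) (A : SPos Xi) : SPos Xi.
Proof.
  refine (@mkSPos Xi (fun x => {p : car A x * car A x | le A (fst p) (snd p)})
            (fun x a b => le A (fst (proj1_sig a)) (fst (proj1_sig b)) /\
                          le A (snd (proj1_sig a)) (snd (proj1_sig b))) _ _ _).
  - intros x a; split; apply (le_refl _).
  - intros x a b c [h1 h2] [h3 h4]; split; eapply le_trans; eauto.
  - intros x [[a1 a2] pa] [[b1 b2] pb] [h1 h2] [h3 h4]; simpl in *.
    pose proof (le_antisym _ h1 h3) as e1; pose proof (le_antisym _ h2 h4) as e2.
    subst b1 b2. f_equal; apply proof_irrelevance.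
Defined.

Arguments relP {Xi} A.
Definition rel1 (Xi : Type) (A : SPos Xi) : SMor (relP A) A :=
  @mkSMor Xi (relP A) A (fun x p => fst (proj1_sig p)) (fun x a b h => proj1 h).
Arguments rel1 {Xi} A.
Definition rel2 (Xi : Type) (A : SPos Xi) : SMor (relP A) A :=
  @mkSMor Xi (relP A) A (fun x p => snd (proj1_sig p)) (fun x a b h => proj2 h).

Arguments rel2 {Xi} A.
Definition disc (Xi : Type) (S : Xi -> Type) : SPos Xi.
Proof.
  refine (@mkSPos Xi S (fun x a b => a = b) _ _ _).
  - reflexivity.
  - intros; congruence.
  - intros; assumption.
Defined.

Arguments disc {Xi} S.
Definition dfun (Xi : Type) (S : Xi -> Type) (B : SPos Xi) (f : forall x, S x -> car B x)
  : SMor (disc S) B.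
Proof.
  refine (@mkSMor Xi (disc S) B f _).
  intros x a b h; simpl in h; subst b; apply (le_refl _).
Defined.

Arguments dfun {Xi S B} f.
Definition dmap (Xi : Type) (S T : Xi -> Type) (f : forall x, S x -> T x)
  : SMor (disc S) (disc T) := @dfun Xi S (disc T) f.

Arguments dmap {Xi S T} f.
Definition finS (Xi : Type) (S : Xi -> Type) : Prop :=
  exists l : list {x : Xi & S x}, forall p, In p l.

Arguments finS {Xi} S.
Record Monad (Xi : Type) := {
  MO : SPos Xi -> SPos Xi;
  Mmap : forall A B : SPos Xi, SMor A B -> SMor (MO A) (MO B);
  sing : forall A : SPos Xi, SMor A (MO A);
  flat : forall A : SPos Xi, SMor (MO (MO A)) (MO A);
  Mmap_ext : forall A B (f g : SMor A B), meq f g -> meq (Mmap _ _ f) (Mmap _ _ g);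
  Mmap_id : forall A, meq (Mmap _ _ (idm A)) (idm (MO A));
  Mmap_comp : forall A B C (f : SMor A B) (g : SMor B C),
      meq (Mmap _ _ (scomp g f)) (scomp (Mmap _ _ g) (Mmap _ _ f));
  sing_nat : forall A B (f : SMor A B), meq (scomp (Mmap _ _ f) (sing A)) (scomp (sing B) f);
  flat_nat : forall A B (f : SMor A B),
      meq (scomp (Mmap _ _ f) (flat A)) (scomp (flat B) (Mmap _ _ (Mmap _ _ f)));
  flat_sing : forall A, meq (scomp (flat A) (sing (MO A))) (idm (MO A));
  flat_Msing : forall A, meq (scomp (flat A) (Mmap _ _ (sing A))) (idm (MO A));
  flat_flat : forall A, meq (scomp (flat A) (flat (MO A))) (scomp (flat A) (Mmap _ _ (flat A)));
  M_inj : forall A B (f : SMor A B), injS f -> injS (Mmap _ _ f);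
  M_surj : forall A B (f : SMor A B), surjS f -> surjS (Mmap _ _ f);
  M_bij : forall A B (f : SMor A B), bijS f -> bijS (Mmap _ _ f);
  (* preservation of preimages: M(f^-1[C]) = (Mf)^-1[MC] *)
  M_preim : forall A B (f : SMor A B) (P : forall x, car B x -> Prop) x (s : car (MO A) x),
      (exists t : car (MO (sub B P)) x, smap (Mmap _ _ (incl P)) x t = smap (Mmap _ _ f) x s) ->
      exists r : car (MO (sub A (fun y a => P y (smap f y a)))) x,
        smap (Mmap _ _ (incl _)) x r = s;
  (* standard ordering: s <= t iff some u in M(<=) projects to s and t *)
  M_std_order : forall A x (s t : car (MO A) x),
      le (MO A) s t <->
      exists u : car (MO (relP A)) x,
        smap (Mmap _ _ (rel1 A)) x u = s /\ smap (Mmap _ _ (rel2 A)) x u = t }.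
Arguments MO {Xi} _ _.
Arguments Mmap {Xi} _ {A B} _.
Arguments sing {Xi} _ A.
Arguments flat {Xi} _ A.

Record Alg (Xi : Type) (M : Monad Xi) := {
  acar : SPos Xi;
  api : SMor (MO M acar) acar;
  api_mult : meq (scomp api (Mmap M api)) (scomp api (flat M acar));
  api_unit : meq (scomp api (sing M acar)) (idm acar) }.
Arguments Alg {Xi} M.
Arguments acar {Xi M} _.
Arguments api {Xi M} _.

Definition isAlgMorFree (Xi : Type) (M : Monad Xi) (A : SPos Xi) (B : Alg M)
  (h : SMor (MO M A) (acar B)) : Prop :=
  meq (scomp h (flat M A)) (scomp (api B) (Mmap M h)).

Arguments isAlgMorFree {Xi M A B} h.
Definition isFreeMor (Xi : Type) (M : Monad Xi) (A B : SPos Xi)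
  (h : SMor (MO M A) (MO M B)) : Prop :=
  meq (scomp h (flat M A)) (scomp (flat M B) (Mmap M h)).

Arguments isFreeMor {Xi M A B} h.
Record alph (Xi : Type) := { asym : Xi -> Type; afin : finS asym }.
Arguments asym {Xi} _ _.

Definition FM (Xi : Type) (M : Monad Xi) (S : alph Xi) : SPos Xi := MO M (disc (asym S)).

Arguments FM {Xi} M S.
Definition lang (Xi : Type) (M : Monad Xi) (S : alph Xi) (xi : Xi) : Type :=
  car (FM M S) xi -> Prop.

(* Sigma + {box}, with box of sort zeta *)
Arguments lang {Xi} M S xi.
Definition addHole (Xi : Type) (S : Xi -> Type) (zeta : Xi) : Xi -> Type :=
  fun x => (S x + (x = zeta))%type.

(* p[s]: image of p under the algebra morphism extending box |-> s, c |-> sing c *)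
Arguments addHole {Xi} S zeta _.
Definition holeFun (Xi : Type) (M : Monad Xi) (S : Xi -> Type) (zeta : Xi)
  (s : car (MO M (disc S)) zeta) : forall x, addHole S zeta x -> car (MO M (disc S)) x :=
  fun x a => match a with
             | inl c => smap (sing M (disc S)) x c
             | inr e => match eq_sym e in _ = y return car (MO M (disc S)) y with
                        | eq_refl => s end
             end.

Arguments holeFun {Xi} M {S zeta} s x a.
Definition plug (Xi : Type) (M : Monad Xi) (S : Xi -> Type) (zeta xi : Xi)
  (p : car (MO M (disc (addHole S zeta))) xi) (s : car (MO M (disc S)) zeta)
  : car (MO M (disc S)) xi :=
  smap (flat M (disc S)) xi
    (smap (Mmap M (dfun (B := MO M (disc S)) (holeFun M s))) xi p).

Arguments plug {Xi M S zeta xi} p s.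
Record LogicFam (Xi : Type) (M : Monad Xi) := {
  form : alph Xi -> Xi -> Type;
  sat : forall (S : alph Xi) (xi : Xi), car (FM M S) xi -> form S xi -> Prop;
  lam : forall (S G : alph Xi), (forall x, asym S x -> asym G x) ->
        forall xi, form G xi -> form S xi;
  lam_sat : forall S G (f : forall x, asym S x -> asym G x) xi (phi : form G xi)
                   (s : car (FM M S) xi),
      sat S xi s (lam S G f xi phi) <-> sat G xi (smap (Mmap M (dmap f)) xi s) phi;
  lam_id : forall S xi (phi : form S xi), lam S S (fun x (a : asym S x) => a) xi phi = phi;
  lam_comp : forall S G D (f : forall x, asym S x -> asym G x)
                    (g : forall x, asym G x -> asym D x) xi (phi : form D xi),
      lam S D (fun x a => g x (f x a)) xi phi = lam S G f xi (lam G D g xi phi) }.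
Arguments LogicFam {Xi} M.
Arguments form {Xi M} _ _ _.
Arguments sat {Xi M} _ {S xi} _ _.

Definition Ldef (Xi : Type) (M : Monad Xi) (L : LogicFam M) (S : alph Xi) (xi : Xi)
  (K : lang M S xi) : Prop :=
  exists phi : form L S xi, forall s, K s <-> sat L s phi.

Arguments Ldef {Xi M} L {S xi} K.
Definition variety (Xi : Type) (M : Monad Xi)
  (V : forall (S : alph Xi) (xi : Xi), lang M S xi -> Prop) : Prop :=
  (forall S xi, V S xi (fun _ => False)) /\
  (forall S xi, V S xi (fun _ => True)) /\
  (forall S xi (K1 K2 : lang M S xi), V S xi K1 -> V S xi K2 ->
      V S xi (fun s => K1 s \/ K2 s)) /\
  (forall S xi (K1 K2 : lang M S xi), V S xi K1 -> V S xi K2 ->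
      V S xi (fun s => K1 s /\ K2 s)) /\
  (forall (S G : alph Xi) (psi : SMor (FM M S) (FM M G)), isFreeMor psi ->
      forall xi (K : lang M G xi), V G xi K -> V S xi (fun s => K (smap psi xi s))) /\
  (forall (S : alph Xi) xi zeta (K : lang M S xi)
          (p : car (MO M (disc (addHole (asym S) zeta))) xi),
      V S xi K -> V S zeta (fun s => K (plug p s))).

Arguments variety {Xi} M V.
Definition varietal (Xi : Type) (M : Monad Xi) (L : LogicFam M) : Prop :=
  variety M (fun S xi K => Ldef L K).

Arguments varietal {Xi M} L.
Definition upclosed (Xi : Type) (A : SPos Xi) (xi : Xi) (P : car A xi -> Prop) : Prop :=
  forall a b, le A a b -> P a -> P b.

Arguments upclosed {Xi A xi} P.
Definition recognises (Xi : Type) (M : Monad Xi) (A : Alg M) (S : alph Xi) (xi : Xi)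
  (K : lang M S xi) : Prop :=
  exists phi : SMor (FM M S) (acar A), isAlgMorFree phi /\
  exists P : car (acar A) xi -> Prop, upclosed P /\
    forall s, K s <-> P (smap phi xi s).

Arguments recognises {Xi M} A {S xi} K.
Definition subcar (Xi : Type) (A : SPos Xi) (C : forall x, car A x -> Prop) : Xi -> Type :=
  fun x => {a : car A x | C x a}.

Arguments subcar {Xi A} C _.
Definition finitary (Xi : Type) (M : Monad Xi) (A : Alg M) : Prop :=
  (forall x, exists l : list (car (acar A) x), forall a, In a l) /\
  exists C : forall x, car (acar A) x -> Prop, finS (subcar C) /\
    forall x (a : car (acar A) x), exists s : car (MO M (sub (acar A) C)) x,
      smap (api A) x (smap (Mmap M (incl C)) x s) = a.

Arguments finitary {Xi M} A.
Definition iotaC (Xi : Type) (A : SPos Xi) (C : forall x, car A x -> Prop)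
  : SMor (disc (subcar C)) (sub A C) := dfun (B := sub A C) (fun x a => a).

Arguments iotaC {Xi A} C.
Definition defEmbedded (Xi : Type) (M : Monad Xi) (L : LogicFam M) (A : Alg M)
  (C : forall x, car (acar A) x -> Prop) (hC : finS (subcar C)) : Prop :=
  forall xi (a : car (acar A) xi),
    @Ldef Xi M L {| asym := subcar C; afin := hC |} xi
      (fun t => le (acar A) a
                  (smap (api A) xi (smap (Mmap M (incl C)) xi (smap (Mmap M (iotaC C)) xi t)))).

Arguments defEmbedded {Xi M} L {A C} hC.
Definition LdefAlg (Xi : Type) (M : Monad Xi) (L : LogicFam M) (A : Alg M) : Prop :=
  finitary A /\
  forall (C : forall x, car (acar A) x -> Prop) (hC : finS (subcar C)), defEmbedded L hC.


Arguments LdefAlg {Xi M} L A.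

From Pilot Require Import Defs.
From Stdlib Require Import List ProofIrrelevance Classical.

(* An algebra morphism out of a free algebra is determined by the images of
   the generators; these form a finite subset C of A, and the morphism
   factors through the free algebra over C. So each upset
   {s | a <= phi s} is the inverse image, under a morphism of free algebras,
   of one of the languages witnessing that C is definably embedded, and a
   language recognised through an upward closed P is the finite union of
   these upsets over the a in P. Conversely, the languages in the definition
   of a definable embedding are recognised by A through the morphism
   induced by the inclusion of C. *)

Section MonadFacts.
Context {Xi : Type} {M : Monad Xi}.

Lemma Mmap_isFreeMor (A B : SPos Xi) (f : SMor A B) : isFreeMor (Mmap M f).
Proof. exact (flat_nat _ M _ _ f). Qed.

Lemma api_Mmap_isAlgMorFree (A : Alg M) (B : SPos Xi) (h : SMor B (acar A)) :
  isAlgMorFree (scomp (api A) (Mmap M h)).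
Proof.
  intros x s.
  pose proof (flat_nat _ M _ _ h x s) as Hnat.
  pose proof (api_mult _ _ A x (smap (Mmap M (Mmap M h)) x s)) as Hmult.
  pose proof (Mmap_comp _ M _ _ _ (Mmap M h) (api A) x s) as Hcomp.
  simpl in *; now rewrite Hnat, <- Hmult, <- Hcomp.
Qed.

Lemma isAlgMorFree_generators (A : Alg M) (B : SPos Xi) (phi : SMor (MO M B) (acar A)) :
  isAlgMorFree phi -> meq phi (scomp (api A) (Mmap M (scomp phi (sing M B)))).
Proof.
  intros Hphi x s.
  pose proof (Mmap_comp _ M _ _ _ (sing M B) phi x s) as Hcomp.
  pose proof (Hphi x (smap (Mmap M (sing M B)) x s)) as Hmor.
  pose proof (flat_Msing _ M B x s) as Hunit.
  simpl in *; now rewrite Hcomp, <- Hmor, Hunit.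
Qed.

End MonadFacts.

Section Image.
Context {Xi : Type} {S : Xi -> Type} {A : SPos Xi} (f : forall x, S x -> car A x).

Definition imS : forall x, car A x -> Prop := fun x a => exists c, f x c = a.

Definition corestrS : forall x, S x -> subcar imS x :=
  fun x c => exist (imS x) (f x c) (ex_intro _ c eq_refl).

Lemma finS_imS : finS S -> finS (subcar imS).
Proof.
  intros [l Hl].
  exists (map (fun p => existT (subcar imS) (projT1 p) (corestrS (projT1 p) (projT2 p))) l).
  intros [x [a Ha]].
  destruct Ha as [c Hc] eqn:E; subst a.
  apply in_map_iff; exists (existT _ x c); split; [|apply Hl].
  simpl; unfold corestrS; now rewrite (proof_irrelevance _ (ex_intro _ c eq_refl) Ha), E.
Qed.

End Image.

Section FiniteGeneration.
Context {Xi : Type} {M : Monad Xi} (A : Alg M) (S : alph Xi)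
  (phi : SMor (FM M S) (acar A)).

Let gen : forall x, asym S x -> car (acar A) x :=
  fun x c => smap phi x (smap (sing M (disc (asym S))) x c).

Definition genAlph : alph Xi :=
  {| asym := subcar (imS gen); afin := finS_imS gen (afin _ S) |}.

Definition toGenAlph : SMor (FM M S) (FM M genAlph) := Mmap M (dmap (corestrS gen)).

Lemma isAlgMorFree_factor_gen : isAlgMorFree phi -> forall xi (s : car (FM M S) xi),
  smap phi xi s =
  smap (api A) xi (smap (Mmap M (Defs.incl (imS gen))) xi
    (smap (Mmap M (iotaC (imS gen))) xi (smap toGenAlph xi s))).
Proof.
  intros Hphi xi s; unfold toGenAlph.
  refine (eq_trans (isAlgMorFree_generators A _ phi Hphi xi s) _); simpl; f_equal.
  pose proof (Mmap_comp _ M _ _ _ (iotaC (imS gen)) (Defs.incl (imS gen)) xi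
    (smap (Mmap M (dmap (corestrS gen))) xi s)) as Hcomp1.
  pose proof (Mmap_comp _ M _ _ _ (dmap (corestrS gen))
    (scomp (Defs.incl (imS gen)) (iotaC (imS gen))) xi s) as Hcomp2.
  simpl in *; refine (eq_trans _ (eq_trans Hcomp2 Hcomp1)).
  now apply Mmap_ext.
Qed.

End FiniteGeneration.

Lemma upclosed_finite_union (Xi : Type) (A : SPos Xi) (xi : Xi) (l : list (car A xi))
  (P : car A xi -> Prop) :
  (forall a, In a l) -> upclosed P ->
  forall b, P b <-> exists a, In a l /\ (P a /\ le A a b).
Proof.
  intros Hl HP b; split.
  - intros Pb; exists b; repeat split; [apply Hl | exact Pb | apply le_refl].
  - intros [a [_ [Pa Hab]]]; exact (HP _ _ Hab Pa).
Qed.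

Section Definability.
Context {Xi : Type} {M : Monad Xi} (L : LogicFam M).

Lemma Ldef_ext (S : alph Xi) (xi : Xi) (K1 K2 : lang M S xi) :
  (forall s, K1 s <-> K2 s) -> Ldef L K1 -> Ldef L K2.
Proof. intros H [phi Hp]; exists phi; intros s; rewrite <- H; apply Hp. Qed.

Hypothesis HL : varietal L.

Lemma Ldef_False (S : alph Xi) (xi : Xi) : Ldef L (fun _ : car (FM M S) xi => False).
Proof. exact (proj1 HL S xi). Qed.

Lemma Ldef_or (S : alph Xi) (xi : Xi) (K1 K2 : lang M S xi) :
  Ldef L K1 -> Ldef L K2 -> Ldef L (fun s => K1 s \/ K2 s).
Proof. exact (proj1 (proj2 (proj2 HL)) S xi K1 K2). Qed.

Lemma Ldef_preim (S G : alph Xi) (psi : SMor (FM M S) (FM M G)) (xi : Xi)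
  (K : lang M G xi) : isFreeMor psi -> Ldef L K -> Ldef L (fun s => K (smap psi xi s)).
Proof. intros Hpsi; exact (proj1 (proj2 (proj2 (proj2 (proj2 HL)))) S G psi Hpsi xi K). Qed.

Lemma Ldef_and_const (S : alph Xi) (xi : Xi) (Q : Prop) (K : lang M S xi) :
  Ldef L K -> Ldef L (fun s => Q /\ K s).
Proof.
  intros HK; destruct (classic Q) as [HQ | HnQ].
  - apply (Ldef_ext _ _ K); [tauto | exact HK].
  - apply (Ldef_ext _ _ (fun _ => False)); [tauto | apply Ldef_False].
Qed.

Lemma Ldef_finite_exists (S : alph Xi) (xi : Xi) (T : Type) (l : list T)
  (K : T -> lang M S xi) :
  (forall a, In a l -> Ldef L (K a)) -> Ldef L (fun s => exists a, In a l /\ K a s).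
Proof.
  induction l as [| a l IH]; intros HK.
  - apply (Ldef_ext _ _ (fun _ => False)); [firstorder | apply Ldef_False].
  - apply (Ldef_ext _ _ (fun s => K a s \/ exists b, In b l /\ K b s)).
    + intros s; split.
      * intros [Ha | [b [Hb Kb]]]; [exists a | exists b]; simpl; tauto.
      * intros [b [[<- | Hb] Kb]]; [left | right; exists b]; tauto.
    + apply Ldef_or; [apply HK; now left | apply IH; intros b Hb; apply HK; now right].
Qed.

Lemma Ldef_above_isAlgMorFree (A : Alg M) (S : alph Xi) (phi : SMor (FM M S) (acar A)) :
  (forall (C : forall x, car (acar A) x -> Prop) (hC : finS (subcar C)), defEmbedded L hC) ->
  isAlgMorFree phi ->
  forall xi (a : car (acar A) xi), Ldef L (fun s => le (acar A) a (smap phi xi s)).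
Proof.
  intros HE Hphi xi a.
  pose proof (Ldef_preim _ _ (toGenAlph A S phi) xi _ (Mmap_isFreeMor _ _ _)
    (HE _ (afin _ (genAlph A S phi)) xi a)) as Hdef.
  refine (Ldef_ext _ _ _ _ _ Hdef).
  intros s; simpl; now rewrite <- (isAlgMorFree_factor_gen A S phi Hphi xi s).
Qed.

Lemma Ldef_recognised (A : Alg M) :
  LdefAlg L A ->
  forall (S : alph Xi) (xi : Xi) (K : lang M S xi), recognises A K -> Ldef L K.
Proof.
  intros [[Hfin _] HE] S xi K [phi [Hphi [P [HP HK]]]].
  destruct (Hfin xi) as [l Hl].
  apply (Ldef_ext _ _ (fun s => exists a, In a l /\ (P a /\ le (acar A) a (smap phi xi s)))).
  { intros s; rewrite HK; symmetry; now apply upclosed_finite_union. }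
  apply Ldef_finite_exists; intros a _.
  apply Ldef_and_const, (Ldef_above_isAlgMorFree A S phi HE Hphi).
Qed.

End Definability.

Lemma recognises_above_embedded (Xi : Type) (M : Monad Xi) (A : Alg M)
  (C : forall x, car (acar A) x -> Prop) (hC : finS (subcar C)) (xi : Xi)
  (a : car (acar A) xi) :
  recognises A (S := {| asym := subcar C; afin := hC |}) (xi := xi)
    (fun t => le (acar A) a
      (smap (api A) xi (smap (Mmap M (Defs.incl C)) xi (smap (Mmap M (iotaC C)) xi t)))).
Proof.
  exists (scomp (api A) (Mmap M (scomp (Defs.incl C) (iotaC C)))).
  split; [apply api_Mmap_isAlgMorFree|].
  exists (fun b => le (acar A) a b); split.
  - intros b c Hbc Hab; exact (le_trans _ Hab Hbc).
  - intros t; simpl; now rewrite (Mmap_comp _ M _ _ _ (iotaC C) (Defs.incl C) xi t).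
Qed.

Theorem theorem9p4 (Xi : Type) (M : Monad Xi) (L : LogicFam M) (HL : varietal L)
  (A : Alg M) (HA : finitary A) :
  LdefAlg L A <->
  (forall (S : alph Xi) (xi : Xi) (K : lang M S xi), recognises A K -> Ldef L K).
Proof.
  split.
  - exact (Ldef_recognised L HL A).
  - intros Hrec; split; [exact HA|].
    intros C hC xi a; apply Hrec, recognises_above_embedded.
Qed.
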